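(* Let $X,Y$ be random variables, let $F_{Y\mid X}(y\mid x)$ denote a (regular) conditional distribution function of $Y$ given $X=x$, and for a non-decreasing Borel function $h$ let $h^*(x)=\mathbb E[h(Y)\mid X=x]=\int h(y)\,F_{Y\mid X}(\mathrm dy\mid x)$ (considered for those $h$ for which this is finite for every $x$). The following are equivalent: (i) for all non-decreasing Borel functions $g$ and $h$, the functions $g$ and $h^*$ are weakly comonotonic with respect to all product measures $\varrho_1\times\varrho_2$ of Borel probability measures on $\mathbb R$, i.e. $\iint_{\mathbb R^2}(g(x)-g(x'))(h^*(x)-h^*(x'))\,\varrho_1(\mathrm dx)\varrho_2(\mathrm dx')\ge0$ whenever this integral exists (in particular $(g(x)-g(x'))(h^*(x)-h^*(x'))\ge0$ for all $x,x'$); (ii) $Y$ is positively regression dependent on $X$, i.e. for every $y\in\mathbb R$ the function $x\mapsto F_{Y\mid X}(y\mid x)$ is non-increasing. *)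

From HB Require Import structures.
From mathcomp Require Import all_boot all_order all_algebra.
From mathcomp Require Import all_classical all_reals all_analysis measurable_realfun.
Set Implicit Arguments. Unset Strict Implicit. Unset Printing Implicit Defensive.
Import Order.TTheory GRing.Theory Num.Theory.
Local Open Scope classical_set_scope.
Local Open Scope ring_scope.

Definition cond_cdf (R : realType) (K : R -> probability R R) (y x : R) : \bar R :=
  K x [set` `]-oo, y]].

Definition is_regular_cond_distr (d : measure_display) (T : measurableType d)
  (R : realType) (P : probability T R) (X Y : T -> R) (K : R -> probability R R) :=
  (forall B : set R, measurable B -> measurable_fun [set: R] (fun x => K x B : \bar R)) /\
  (forall A B : set R, measurable A -> measurable B ->
     P (X @^-1` A `&` Y @^-1` B) = (\int[pushforward P X]_(x in A) K x B)%E).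

(* h^*(x) = \int h(y) F_{Y|X}(dy | x)  (used when this is finite for every x) *)
Definition hstar (R : realType) (K : R -> probability R R) (h : R -> R) (x : R) : R :=
  fine (\int[K x]_y (h y)%:E)%E.

Definition weakly_comonotonic_wrt (R : realType) (g f : R -> R)
  (rho1 rho2 : probability R R) : Prop :=
  let D := fun z : R * R => ((g z.1 - g z.2) * (f z.1 - f z.2))%:E in
  ((\int[(rho1 \x rho2)%E]_z (D^\+)%E z < +oo)%E \/
   (\int[(rho1 \x rho2)%E]_z (D^\-)%E z < +oo)%E) ->
  (0 <= \int[(rho1 \x rho2)%E]_z D z)%E.

From HB Require Import structures.
From mathcomp Require Import all_boot all_order all_algebra.
From mathcomp Require Import all_classical all_reals all_analysis measurable_realfun.
Set Implicit Arguments. Unset Strict Implicit. Unset Printing Implicit Defensive.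
Import Order.TTheory GRing.Theory Num.Theory.
Local Open Scope classical_set_scope.
Local Open Scope ring_scope.

(* Positive regression dependence says that K x' stochastically dominates
   K x for x <= x'. Dominance passes from half-lines ]-oo, y] to all Borel
   down-sets, hence (via the cdf/ccdf formula for expectations) to integrals
   of non-decreasing functions; so h^* is non-decreasing and the integrand
   (g x - g x')(h^* x - h^* x') is pointwise non-negative. Conversely, with
   g = id, h the indicator of ]y, +oo[ and Dirac masses at x' and x, weak
   comonotonicity reads (x' - x)(K x' ]y, +oo[ - K x ]y, +oo[) >= 0. *)

Section stochastic_dominance.
Local Open Scope ereal_scope.
Variables (R : realType) (mu nu : probability R R).
Hypothesis cdf_le : forall y : R, nu `]-oo, y]%classic <= mu `]-oo, y]%classic.

Lemma stochastic_dominance_open_ray (s : R) :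
  nu `]-oo, s[%classic <= mu `]-oo, s[%classic.
Proof.
pose F n := `]-oo, (s - n.+1%:R^-1)%R]%classic.
have mF n : measurable (F n) by exact: measurable_itv.
have ndF : nondecreasing_seq F.
  move=> m n mn; apply/subsetPset => x; rewrite /F /= !in_itv /= => /le_trans; apply.
  by rewrite lerD2l lerN2 lef_pV2 ?posrE // ler_nat.
have FU : \bigcup_n F n = `]-oo, s[%classic.
  apply/seteqP; split => x /=.
    case=> n _; rewrite /F /= !in_itv /= => /le_lt_trans; apply.
    by rewrite ltrBlDr ltrDl invr_gt0.
  rewrite in_itv /= => /ltr_add_invr[n xs].
  by exists n => //; rewrite /F /= in_itv /= lerBrDr ltW.
have mU : measurable (\bigcup_n F n) by rewrite FU; exact: measurable_itv.
rewrite -FU; apply: lee_cvg_to (nondecreasing_cvg_mu mF mU ndF)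
  (nondecreasing_cvg_mu mF mU ndF) _.
by apply: nearW => n; exact: cdf_le.
Qed.

Lemma stochastic_dominance_downset (D : set R) : measurable D ->
  (forall a b : R, (a <= b)%R -> D b -> D a) -> nu D <= mu D.
Proof.
move=> mD downD.
have [->|DT] := pselect (D = setT); first by rewrite !probability_setT.
have [->|D0] := pselect (D = set0); first by rewrite !measure0.
have [b nDb] : exists b, ~ D b.
  by apply/existsNP => Dfull; apply: DT; apply/seteqP; split => // x _; exact: Dfull.
have supD : has_sup D.
  split; first exact/set0P/eqP.
  exists b => x Dx; rewrite leNgt; apply/negP => /ltW bx; exact: nDb (downD _ _ bx Dx).
have Dle x : D x -> (x <= sup D)%R by exact: sup_upper_bound.
have [Ds|nDs] := pselect (D (sup D)).
  suff -> : D = `]-oo, sup D]%classic by exact: cdf_le.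
  apply/seteqP; split => x; rewrite /= in_itv /=; first exact: Dle.
  by move=> xs; exact: downD xs Ds.
suff -> : D = `]-oo, sup D[%classic by exact: stochastic_dominance_open_ray.
apply/seteqP; split => x; rewrite /= in_itv /=.
  by move=> Dx; rewrite lt_neqAle Dle // andbT; apply: contraPneq nDs => <-.
move=> xs; have [|e De] := @sup_adherent _ D (sup D - x) _ supD.
  by rewrite subr_gt0.
by rewrite opprB addrC subrK => /ltW xe; exact: downD xe De.
Qed.

Lemma stochastic_dominance_integral (h : R -> R) :
  measurable_fun setT h -> {homo h : a b / (a <= b)%R} ->
  mu.-integrable setT (EFin \o h) -> nu.-integrable setT (EFin \o h) ->
  \int[mu]_y (h y)%:E <= \int[nu]_y (h y)%:E.
Proof.
move=> mh ndh imu inu; pose X : {mfun R >-> R} := mfun_Sub (mem_set mh).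
have mXle r : measurable (X @^-1` `]-oo, r]) by exact: measurable_funPTI.
have Xle r : nu (X @^-1` `]-oo, r]) <= mu (X @^-1` `]-oo, r]).
  apply: stochastic_dominance_downset => // a c ac /=; rewrite !in_itv /=.
  exact/le_trans/ndh.
change (\int[mu]_y (X y)%:E <= \int[nu]_y (X y)%:E).
rewrite -(expectation_def (P:=mu)) -(expectation_def (P:=nu)).
rewrite (expectation_cdf_ccdf (P:=mu)); last exact/Lfun1_integrable.
rewrite (expectation_cdf_ccdf (P:=nu)); last exact/Lfun1_integrable.
apply: leeB; apply: ge0_le_integral => //.
- by apply: measurable_funTS; exact: (ccdf_measurable (P:=mu)).
- by apply: measurable_funTS; exact: (ccdf_measurable (P:=nu)).
- move=> r _; rewrite /ccdf /distribution /pushforward /=.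
  by rewrite -setCitvl preimage_setC !(probability_setC _ (mXle r)); exact: leeB.
- by apply: measurable_funTS; exact: (cdf_measurable (P:=nu)).
- by apply: measurable_funTS; exact: (cdf_measurable (P:=mu)).
- by move=> r _; exact: Xle.
Qed.

End stochastic_dominance.

Section weak_comonotonicity.
Local Open Scope ereal_scope.
Variable R : realType.

Lemma integral_dirac_prod (a b : R) (f : R * R -> \bar R) :
  measurable_fun setT f ->
  \int[((\d_a : probability R R) \x (\d_b : probability R R))]_z f z = f (a, b).
Proof.
move=> mf; rewrite (@eq_measure_integral _ _ _ _ \d_(a, b)).
  by rewrite integral_dirac // diracT mul1e.
move=> A mA _; rewrite /= /product_measure1 /= integral_dirac //.
  by rewrite diracT mul1e /= !diracE mem_xsection.
exact: measurable_fun_xsection.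
Qed.

Lemma weakly_comonotonic_dirac (g f : R -> R) (a b : R) :
  measurable_fun setT g -> measurable_fun setT f ->
  weakly_comonotonic_wrt g f \d_a \d_b -> (0 <= (g a - g b) * (f a - f b))%R.
Proof.
move=> mg mf; rewrite /weakly_comonotonic_wrt /=.
pose D := fun z : R * R => ((g z.1 - g z.2) * (f z.1 - f z.2))%:E.
have mD : measurable_fun setT D.
  apply/measurable_EFinP; apply: measurable_funM; apply: measurable_funB.
  - exact: measurableT_comp mg measurable_fst.
  - exact: measurableT_comp mg measurable_snd.
  - exact: measurableT_comp mf measurable_fst.
  - exact: measurableT_comp mf measurable_snd.
move=> D_ge0; rewrite -lee_fin.
have -> : ((g a - g b) * (f a - f b))%:E = D (a, b) by [].
rewrite -(integral_dirac_prod a b mD); apply: D_ge0; left.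
rewrite (integral_dirac_prod a b (measurable_funepos mD)).
by rewrite funeposE /D /= gt_max !ltry.
Qed.

Lemma weakly_comonotonic_nondecreasing (g f : R -> R) (rho1 rho2 : probability R R) :
  {homo g : a b / (a <= b)%R} -> {homo f : a b / (a <= b)%R} ->
  weakly_comonotonic_wrt g f rho1 rho2.
Proof.
move=> ndg ndf; rewrite /weakly_comonotonic_wrt /= => _.
apply: integral_ge0 => z _; rewrite lee_fin.
have [le12|/ltW le21] := leP z.1 z.2.
  by apply: mulr_le0; rewrite subr_le0; [exact: ndg | exact: ndf].
by apply: mulr_ge0; rewrite subr_ge0; [exact: ndg | exact: ndf].
Qed.

End weak_comonotonicity.

Lemma indic_itvoy_nondecreasing (R : realType) (y : R) :
  {homo (\1_`]y, +oo[ : R -> R) : a b / a <= b}.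
Proof.
move=> a b ab; rewrite !indicE !mem_setE !in_itv /= !andbT ler_nat.
by case: (ltP y a) => // ya; rewrite (lt_le_trans ya ab).
Qed.

Section conditional_distribution.
Variables (R : realType) (K : R -> probability R R).

Lemma hstar_indic (A : set R) (x : R) : measurable A -> hstar K \1_A x = fine (K x A).
Proof. by move=> mA; rewrite /hstar integral_indic // setIT. Qed.

Lemma cond_cdf_itvoy (y x : R) : cond_cdf K y x = (1 - K x `]y, +oo[%classic)%E.
Proof.
by rewrite /cond_cdf -setCitvr probability_setC //; exact: measurable_itv.
Qed.

Lemma hstar_nondecreasing (h : R -> R) :
  (forall y x x' : R, x <= x' -> (cond_cdf K y x' <= cond_cdf K y x)%E) ->
  measurable_fun setT h -> {homo h : a b / a <= b} ->
  (forall x, (K x).-integrable setT (fun y => (h y)%:E)) ->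
  {homo hstar K h : a b / a <= b}.
Proof.
move=> cdf_le mh ndh ih a b ab.
rewrite /hstar fine_le ?(integrable_fin_num measurableT (ih _)) //.
by apply: stochastic_dominance_integral => // y; exact: cdf_le.
Qed.

End conditional_distribution.

Theorem proposition4p4 (d : measure_display) (T : measurableType d)
  (R : realType) (P : probability T R) (X Y : T -> R)
  (mX : measurable_fun setT X) (mY : measurable_fun setT Y)
  (K : R -> probability R R) (HK : is_regular_cond_distr P X Y K) :
  (forall g h : R -> R,
     measurable_fun setT g -> {homo g : a b / a <= b} ->
     measurable_fun setT h -> {homo h : a b / a <= b} ->
     (forall x, (K x).-integrable setT (fun y => (h y)%:E)) ->
     forall rho1 rho2 : probability R R,
       weakly_comonotonic_wrt g (hstar K h) rho1 rho2)
  <->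
  (forall y x x' : R, x <= x' -> (cond_cdf K y x' <= cond_cdf K y x)%E).
Proof.
split=> [comono y x x' xx'|cdf_le g h mg ndg mh ndh ih rho1 rho2]; last first.
  by apply: weakly_comonotonic_nondecreasing => //; exact: hstar_nondecreasing.
pose A := `]y, +oo[%classic : set R.
have mA : measurable A by exact: measurable_itv.
have ihA z : (K z).-integrable setT (fun t => (\1_A t)%:E) by exact: integrable_indic.
have mhA : measurable_fun setT (hstar K \1_A).
  rewrite (funext (fun z => hstar_indic K z mA)).
  by apply: measurableT_comp; [exact: fine_measurable | exact: HK.1].
have mid : measurable_fun setT (@id R) by [].
have := weakly_comonotonic_dirac mid mhA (comono id \1_A mid
  (fun _ _ => id) (measurable_indic mA) (indic_itvoy_nondecreasing y) ihA \d_x' \d_x).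
rewrite !hstar_indic // !cond_cdf_itvoy.
have [<-|neq_xx'] := eqVneq x x'; first by [].
rewrite pmulr_rge0 ?subr_gt0 ?lt_neqAle ?neq_xx' ?xx' // subr_ge0 => le_KA.
apply: leeB => //.
rewrite -(fineK (fin_num_measure (K x) _ mA)).
by rewrite -(fineK (fin_num_measure (K x') _ mA)) lee_fin.
Qed.
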